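(* Let $\zeta_5=e^{2\pi i/5}$. For every $\tau\in\mathbb{H}^2$, $$\zeta_5\,\theta[\tfrac15;\tfrac15]^5+\zeta_5^3\,\theta[\tfrac35;\tfrac15]^5+\theta[1;\tfrac15]^5-\zeta_5^2\,\theta[\tfrac35;\tfrac95]^5-\zeta_5^4\,\theta[\tfrac15;\tfrac95]^5=0,$$ and $$\zeta_5^3\,\theta[\tfrac15;\tfrac35]^5+\zeta_5^4\,\theta[\tfrac35;\tfrac35]^5+\theta[1;\tfrac35]^5-\zeta_5\,\theta[\tfrac35;\tfrac75]^5-\zeta_5^2\,\theta[\tfrac15;\tfrac75]^5=0.$$
   Context: Let $\mathbb{H}^2=\{\tau\in\mathbb{C}:\Im\tau>0\}$. For a characteristic $(\epsilon,\epsilon')\in\mathbb{R}^2$, the theta function with characteristic is $$\theta[\epsilon;\epsilon'](\zeta,\tau)=\sum_{n\in\mathbb{Z}}\exp\Big(2\pi i\Big[\tfrac12\big(n+\tfrac{\epsilon}{2}\big)^2\tau+\big(n+\tfrac{\epsilon}{2}\big)\big(\zeta+\tfrac{\epsilon'}{2}\big)\Big]\Big),\quad (\zeta,\tau)\in\mathbb{C}\times\mathbb{H}^2,$$ (usually written with the column $\left[\begin{smallmatrix}\epsilon\\ \epsilon'\end{smallmatrix}\right]$), and the theta constant is $\theta[\epsilon;\epsilon']=\theta[\epsilon;\epsilon'](0,\tau)$, regarded as a function of $\tau$. *)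

From Stdlib Require Import Reals ZArith.
From Coquelicot Require Export Coquelicot.
Open Scope R_scope.

Definition cexp (z : C) : C :=
  (exp (Re z) * cos (Im z), exp (Re z) * sin (Im z)).

Definition theta_term (e e' : R) (z tau : C) (n : Z) : C :=
  let m : C := RtoC (IZR n + e / 2) in
  cexp (Cmult (Cmult (RtoC (2 * PI)) Ci)
         (Cplus (Cmult (Cmult (RtoC (1/2)) (Cmult m m)) tau)
                (Cmult m (Cplus z (RtoC (e' / 2)))))).

(* The sum over Z, grouped as the terms n and -(n+1) for n in nat
   (the series converges absolutely for Im tau > 0). *)
Definition theta_pair (e e' : R) (z tau : C) (n : nat) : C :=
  Cplus (theta_term e e' z tau (Z.of_nat n))
        (theta_term e e' z tau (- Z.of_nat n - 1)%Z).

Definition theta (e e' : R) (z tau : C) : C :=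
  (Series (fun n => Re (theta_pair e e' z tau n)),
   Series (fun n => Im (theta_pair e e' z tau n))).

Definition theta_const (e e' : R) (tau : C) : C := theta e e' (RtoC 0) tau.

Definition zeta5 : C := cexp (Cmult (RtoC (2 * PI / 5)) Ci).

(** Substituting m = 10 n + r, a theta constant with characteristic [r/5; j/5]
    (or [r/5; 2 - j/5]) becomes a sum of exp(pi i tau m^2/100 + pi i j m/50) over
    one odd residue class r mod 10.  Weighted by zeta5^(j r), the fifth powers of the
    five constants combine into a sum over the vectors m in Z^5 whose coordinates
    all lie in one common odd class mod 10, of a weight that depends only on |m|^2
    and on sum m (up to 2 pi i).  The reflection m |-> m - (2/5)(sum m)(1,...,1)
    preserves this set and |m|^2, and for odd j flips the sign of the weight, so the
    sum vanishes.  For the truncation to a box of size N the reflection is an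
    involution of the ball |m| < 10N inside the box, and the terms outside the ball
    contribute O(N^5 exp(-pi Im tau N^2)). *)

From Stdlib Require Import Reals Lia Lra ZArith.
From Coquelicot Require Import Coquelicot.
From HB Require Import structures.
From mathcomp Require Import ssreflect ssrfun ssrbool eqtype ssrnat seq.
From mathcomp Require Import div fintype finfun bigop.

Set Warnings "-notation-overridden -ambiguous-paths".
Open Scope R_scope.

HB.instance Definition _ := Monoid.isComLaw.Build C (RtoC 0) Cplus Cplus_assoc Cplus_comm Cplus_0_l.
HB.instance Definition _ := Monoid.isComLaw.Build C (RtoC 1) Cmult Cmult_assoc Cmult_comm Cmult_1_l.
HB.instance Definition _ := Monoid.isMulLaw.Build C (RtoC 0) Cmult Cmult_0_l Cmult_0_r.
HB.instance Definition _ :=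
  Monoid.isAddLaw.Build C Cmult Cplus Cmult_plus_distr_r Cmult_plus_distr_l.

HB.instance Definition _ := Monoid.isComLaw.Build Z 0%Z Z.add Z.add_assoc Z.add_comm Z.add_0_l.
HB.instance Definition _ := Monoid.isComLaw.Build Z 1%Z Z.mul Z.mul_assoc Z.mul_comm Z.mul_1_l.
HB.instance Definition _ := Monoid.isMulLaw.Build Z 0%Z Z.mul Z.mul_0_l Z.mul_0_r.
HB.instance Definition _ := Monoid.isAddLaw.Build Z Z.mul Z.add Z.mul_add_distr_r Z.mul_add_distr_l.

Lemma odd_half_eq {n} : odd n -> n = (2 * n./2 + 1)%coq_nat.
Proof. by move=> Hn; rewrite -{1}(odd_double_half n) Hn -muln2 -multE -plusE /=; lia. Qed.

(** * Exponentials *)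

Lemma exp_le_compat x y : x <= y -> exp x <= exp y.
Proof. by case=> [/exp_increasing /Rlt_le | ->]; last exact: Rle_refl. Qed.

Lemma exp_mul_INR c n : exp (c * INR n) = exp c ^ n.
Proof.
  elim: n => [|n IHn]; first by rewrite Rmult_0_r exp_0.
  by rewrite S_INR Rmult_plus_distr_l Rmult_1_r exp_plus IHn /= Rmult_comm.
Qed.

Lemma pow_le_exp (k : nat) y : 0 <= y -> (y / INR k.+1) ^ k.+1 <= exp y.
Proof.
  move=> Hy; have Hk : 0 < INR k.+1 by apply: lt_0_INR; lia.
  have -> : exp y = exp (y / INR k.+1) ^ k.+1 by rewrite -exp_mul_INR; congr exp; field; lra.
  apply: pow_incr; split; first by apply: Rdiv_le_0_compat.
  have := exp_ineq1_le (y / INR k.+1); lra.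
Qed.

Lemma pow_mul_exp_sqr_le (d : nat) c y : 0 < c -> 1 <= y ->
  y ^ d * exp (- c * (y * y)) <= / (c / INR d.+1) ^ d.+1 * / y.
Proof.
  move=> Hc Hy; have Hd : 0 < INR d.+1 by apply: lt_0_INR; lia.
  have HK : 0 < (c / INR d.+1) ^ d.+1 by apply/pow_lt/Rdiv_lt_0_compat.
  have Hyd : 0 < y ^ d by apply: pow_lt; lra.
  have Hyd2 : y <= y ^ d.+2 by rewrite -{1}(pow_1 y); apply: Rle_pow => //; lia.
  have Hexp := pow_le_exp d (c * (y * y)) ltac:(nra).
  have Hpow : (c * (y * y) / INR d.+1) ^ d.+1 = (c / INR d.+1) ^ d.+1 * (y ^ d * y ^ d.+2).
  { have -> : c * (y * y) / INR d.+1 = c / INR d.+1 * (y * y) by field; lra.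
    by rewrite !Rpow_mult_distr -!pow_add; congr (_ * pow y _); lia. }
  have -> : exp (- c * (y * y)) = / exp (c * (y * y)) by rewrite -exp_Ropp; congr exp; ring.
  apply: Rle_trans (_ : y ^ d * / ((c / INR d.+1) ^ d.+1 * (y ^ d * y ^ d.+2)) <= _).
  - apply: Rmult_le_compat_l; first lra.
    apply: Rinv_le_contravar; last by rewrite -Hpow.
    by apply: Rmult_lt_0_compat => //; apply: Rmult_lt_0_compat => //; apply: pow_lt; lra.
  - have -> : y ^ d * / ((c / INR d.+1) ^ d.+1 * (y ^ d * y ^ d.+2)) =
              / (c / INR d.+1) ^ d.+1 * / y ^ d.+2 by field; have := pow_lt y d.+2; lra.
    apply: Rmult_le_compat_l; first exact/Rlt_le/Rinv_0_lt_compat.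
    by apply: Rinv_le_contravar; first lra.
Qed.

Lemma is_lim_seq_pow_mul_exp_sqr (d : nat) c : 0 < c ->
  is_lim_seq (fun n => INR n ^ d * exp (- c * (INR n * INR n))) 0.
Proof.
  move=> Hc; pose K := / (c / INR d.+1) ^ d.+1.
  apply: (is_lim_seq_le_le_loc (fun _ => 0) _ (fun n => K * / INR n)).
  - exists 1%nat => n Hn; have Hy : 1 <= INR n by apply: (le_INR 1).
    split; last exact: pow_mul_exp_sqr_le.
    by apply: Rmult_le_pos; [apply: pow_le; lra | exact: Rlt_le (exp_pos _)].
  - exact: is_lim_seq_const.
  - have Hinv : is_lim_seq (fun n => / INR n) 0 :=
      is_lim_seq_inv _ _ is_lim_seq_INR ltac:(discriminate).
    by have := is_lim_seq_scal_l _ K _ Hinv; rewrite /= Rmult_0_r.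
Qed.

Lemma cexpD a b : Cmult (cexp a) (cexp b) = cexp (Cplus a b).
Proof.
  case: a b => [a1 a2] [b1 b2]; rewrite /cexp /= exp_plus cos_plus sin_plus.
  apply: injective_projections => /=; ring.
Qed.

Lemma cexp0 : cexp (RtoC 0) = RtoC 1.
Proof. by rewrite /cexp /= exp_0 cos_0 sin_0 Rmult_1_l Rmult_0_r. Qed.

Lemma cexp_2PI_periodic a b k :
  Re a = Re b -> Im a = Im b + 2 * PI * IZR k -> cexp a = cexp b.
Proof.
  move=> Hre Him.
  have sin_kPI : sin (PI * IZR k) = 0 by apply: sin_eq_0_1; exists k; ring.
  have cos_2kPI : cos (2 * PI * IZR k) = 1 by rewrite Rmult_assoc cos_2a_sin sin_kPI; ring.
  have sin_2kPI : sin (2 * PI * IZR k) = 0 by rewrite Rmult_assoc sin_2a sin_kPI; ring.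
  rewrite /cexp Hre Him cos_plus sin_plus cos_2kPI sin_2kPI.
  apply: injective_projections => /=; ring.
Qed.

Lemma cexp_PI_antiperiodic a b k :
  Re a = Re b -> Im a = Im b + PI + 2 * PI * IZR k -> cexp a = Copp (cexp b).
Proof.
  move=> Hre Him; rewrite (cexp_2PI_periodic a (Re b, Im b + PI) k) //.
  rewrite /cexp /= neg_cos neg_sin.
  apply: injective_projections => /=; ring.
Qed.

Lemma Cmod_cexp a : Cmod (cexp a) = exp (Re a).
Proof.
  rewrite /cexp /Cmod /=.
  have -> : (exp (Re a) * cos (Im a)) ^ 2 + (exp (Re a) * sin (Im a)) ^ 2 = exp (Re a) ^ 2.
  { have := sin2_cos2 (Im a); rewrite /Rsqr => Hsc; nra. }
  apply: sqrt_pow2; exact: Rlt_le (exp_pos _).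
Qed.

Lemma Cpow_cexp a n : Cpow (cexp a) n = cexp (INR n * Re a, INR n * Im a).
Proof.
  elim: n => [|n IHn]; first by rewrite /= !Rmult_0_l -cexp0.
  rewrite Cpow_S IHn cexpD S_INR; congr cexp.
  apply: injective_projections => /=; rewrite /Re /Im; ring.
Qed.

Lemma zeta5_pow n : Cpow zeta5 n = cexp (0, 2 * PI * INR n / 5).
Proof.
  rewrite /zeta5 Cpow_cexp; congr cexp.
  apply: injective_projections; rewrite /Re /Im /=; field.
Qed.

Lemma zeta5_pow_eq m n : (m = n %[mod 5])%N -> Cpow zeta5 m = Cpow zeta5 n.
Proof.
  move=> Emn; rewrite !zeta5_pow (divn_eq m 5) (divn_eq n 5) Emn.
  apply: (cexp_2PI_periodic _ _ (Z.of_nat (m %/ 5) - Z.of_nat (n %/ 5))) => //=.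
  rewrite -!plusE -!multE !plus_INR !mult_INR !INR_IZR_INZ minus_IZR; simpl; field.
Qed.

Lemma cexp_PI_fifth_pow5 e (r : nat) : e = INR r / 5 -> odd r ->
  Cpow (cexp (0, PI * e)) 5 = Copp (RtoC 1).
Proof.
  move=> -> Hr; rewrite Cpow_cexp -cexp0.
  rewrite (odd_half_eq Hr); apply: (cexp_PI_antiperiodic _ _ (Z.of_nat r./2)); rewrite /Re /Im /=.
  - ring.
  - rewrite plus_INR mult_INR -INR_IZR_INZ /=; field.
Qed.

Lemma Cpow_big z n : Cpow z n = \big[Cmult/RtoC 1]_(i < n) z.
Proof. by elim: n => [|n IHn]; rewrite ?big_ord0 // big_ord_recl -IHn. Qed.

Lemma big_involution_opp (T : finType) (F : T -> C) (s : T -> T) :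
  involutive s -> (forall x, F (s x) = Copp (F x)) -> \big[Cplus/RtoC 0]_x F x = RtoC 0.
Proof.
  move=> Hs HF.
  have HS : \big[Cplus/RtoC 0]_x F x = Copp (\big[Cplus/RtoC 0]_x F x).
  { rewrite {1}(reindex_inj (inv_inj Hs)) (big_morph Copp Copp_plus_distr Copp_0).
    exact: eq_bigr. }
  case: (\big[Cplus/RtoC 0]_x F x) HS => a b [Ha Hb].
  apply: injective_projections => /=; lra.
Qed.

Lemma Cmod_big_le (T : finType) (F : T -> C) B :
  (forall x, Cmod (F x) <= B) -> Cmod (\big[Cplus/RtoC 0]_x F x) <= INR #|T| * B.
Proof.
  move=> HF; rewrite cardT -big_enum; elim: (enum T) => [|y s IHs].
  - rewrite big_nil Cmod_0 /=; lra.
  - rewrite big_cons -[size _]/(size s).+1 S_INR; apply: Rle_trans (Cmod_triangle _ _) _.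
    have := HF y; lra.
Qed.

(** * Limits of complex sequences *)

Definition is_lim_Cseq (u : nat -> C) (l : C) :=
  is_lim_seq (fun n => Re (u n)) (Re l) /\ is_lim_seq (fun n => Im (u n)) (Im l).

Lemma is_lim_Cseq_ext u v l : (forall n, u n = v n) -> is_lim_Cseq u l -> is_lim_Cseq v l.
Proof.
  move=> Euv [Hre Him]; split.
  - by apply: is_lim_seq_ext Hre => n; rewrite Euv.
  - by apply: is_lim_seq_ext Him => n; rewrite Euv.
Qed.

Lemma is_lim_Cseq_const a : is_lim_Cseq (fun _ => a) a.
Proof. split; exact: is_lim_seq_const. Qed.

Lemma is_lim_Cseq_plus u v a b :
  is_lim_Cseq u a -> is_lim_Cseq v b -> is_lim_Cseq (fun n => Cplus (u n) (v n)) (Cplus a b).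
Proof. by move=> [Hu1 Hu2] [Hv1 Hv2]; split => /=; apply: is_lim_seq_plus'. Qed.

Lemma is_lim_Cseq_opp u a : is_lim_Cseq u a -> is_lim_Cseq (fun n => Copp (u n)) (Copp a).
Proof.
  by move=> [Hu1 Hu2]; split; [exact: (proj1 (is_lim_seq_opp _ _) Hu1) |
    exact: (proj1 (is_lim_seq_opp _ _) Hu2)].
Qed.

Lemma is_lim_Cseq_mult u v a b :
  is_lim_Cseq u a -> is_lim_Cseq v b -> is_lim_Cseq (fun n => Cmult (u n) (v n)) (Cmult a b).
Proof.
  move=> [Hu1 Hu2] [Hv1 Hv2]; split => /=.
  - by apply: is_lim_seq_minus'; apply: is_lim_seq_mult'.
  - by apply: is_lim_seq_plus'; apply: is_lim_seq_mult'.
Qed.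

Lemma is_lim_Cseq_pow u a n : is_lim_Cseq u a -> is_lim_Cseq (fun k => Cpow (u k) n) (Cpow a n).
Proof.
  move=> Hu; elim: n => [|n IHn]; first exact: is_lim_Cseq_const.
  exact: is_lim_Cseq_mult.
Qed.

Lemma is_lim_Cseq_unique u a b : is_lim_Cseq u a -> is_lim_Cseq u b -> a = b.
Proof.
  case: a b => [a1 a2] [b1 b2] [/is_lim_seq_unique Ha1 /is_lim_seq_unique Ha2]
    [/is_lim_seq_unique Hb1 /is_lim_seq_unique Hb2].
  rewrite Ha1 in Hb1; rewrite Ha2 in Hb2.
  by case: Hb1 => /= ->; case: Hb2 => /= ->.
Qed.

Lemma Rabs_Re_le_Cmod z : Rabs (Re z) <= Cmod z.
Proof. have := Rmax_Cmod z; have := Rmax_l (Rabs (Re z)) (Rabs (Im z)); rewrite /Re /Im; lra. Qed.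

Lemma Rabs_Im_le_Cmod z : Rabs (Im z) <= Cmod z.
Proof. have := Rmax_Cmod z; have := Rmax_r (Rabs (Re z)) (Rabs (Im z)); rewrite /Re /Im; lra. Qed.

Lemma is_lim_Cseq_0 u b :
  (forall n, Cmod (u n) <= b n) -> is_lim_seq b 0 -> is_lim_Cseq u (RtoC 0).
Proof.
  move=> Hub Hb.
  have Hb' : is_lim_seq (fun n => - b n) 0.
  { have := proj1 (is_lim_seq_opp b 0) Hb; by rewrite /= Ropp_0. }
  have squeeze (p : C -> R) : (forall z, Rabs (p z) <= Cmod z) ->
    is_lim_seq (fun n => p (u n)) 0.
  { move=> Hp; apply: (is_lim_seq_le_le _ _ _ 0 _ Hb' Hb) => n.
    have := Hp (u n); have := Hub n; split_Rabs; lra. }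
  split; apply: squeeze; [exact: Rabs_Re_le_Cmod | exact: Rabs_Im_le_Cmod].
Qed.

Lemma partial_sum_parts (u : nat -> C) N :
  Re (\big[Cplus/RtoC 0]_(i < N.+1) u i) = sum_n (fun n => Re (u n)) N /\
  Im (\big[Cplus/RtoC 0]_(i < N.+1) u i) = sum_n (fun n => Im (u n)) N.
Proof.
  elim: N => [|N [IHre IHim]].
  - rewrite big_ord_recr big_ord0 !sum_O /= /Re /Im /=; split; ring.
  - by rewrite big_ord_recr !sum_Sn -IHre -IHim.
Qed.

Lemma is_lim_Cseq_series (u : nat -> C) :
  ex_series (fun n => Re (u n)) -> ex_series (fun n => Im (u n)) ->
  is_lim_Cseq (fun N => \big[Cplus/RtoC 0]_(i < N) u i)
    (Series (fun n => Re (u n)), Series (fun n => Im (u n))).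
Proof.
  move=> /Series_correct Hre /Series_correct Him; split; apply/is_lim_seq_incr_1.
  - apply: (is_lim_seq_ext (sum_n (fun n => Re (u n)))); last exact: Hre.
    by move=> N; rewrite (proj1 (partial_sum_parts u N)).
  - apply: (is_lim_seq_ext (sum_n (fun n => Im (u n)))); last exact: Him.
    by move=> N; rewrite (proj2 (partial_sum_parts u N)).
Qed.

(** * Partial sums of theta constants *)

Definition theta_partial e e' tau N : C :=
  \big[Cplus/RtoC 0]_(i < N) theta_pair e e' (RtoC 0) tau i.

Lemma Cmod_theta_term e e' tau n :
  Cmod (theta_term e e' (RtoC 0) tau n) = exp (- PI * Im tau * (IZR n + e / 2) ^ 2).
Proof.
  rewrite /theta_term Cmod_cexp; congr exp.
  case: tau => t1 t2; rewrite /Re /Im /=; field.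
Qed.

Lemma Cmod_theta_pair_le e e' tau n : 0 <= e <= 2 -> 0 < Im tau ->
  Cmod (theta_pair e e' (RtoC 0) tau n) <= 2 * exp (- PI * Im tau) ^ n.
Proof.
  move=> He Htau.
  have HPI : 0 < PI * Im tau by have := PI_RGT_0; nra.
  have Hsq : INR n <= INR n * INR n.
  { case: n => [|k]; rewrite ?S_INR /=; [lra | have := pos_INR k; nra]. }
  have Hn := pos_INR n.
  have term_le (m : Z) : INR n <= (IZR m + e / 2) ^ 2 ->
      exp (- PI * Im tau * (IZR m + e / 2) ^ 2) <= exp (- PI * Im tau) ^ n.
  { move=> Hm; rewrite -exp_mul_INR; apply: exp_le_compat; nra. }
  rewrite /theta_pair; apply: Rle_trans (Cmod_triangle _ _) _.
  rewrite !Cmod_theta_term.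
  have := term_le (Z.of_nat n); have := term_le (- Z.of_nat n - 1)%Z.
  rewrite minus_IZR opp_IZR -INR_IZR_INZ; nra.
Qed.

Lemma is_lim_Cseq_theta_partial e e' tau : 0 <= e <= 2 -> 0 < Im tau ->
  is_lim_Cseq (theta_partial e e' tau) (theta_const e e' tau).
Proof.
  move=> He Htau.
  have Hq : Rabs (exp (- PI * Im tau)) < 1.
  { rewrite Rabs_pos_eq; last exact: Rlt_le (exp_pos _).
    rewrite -exp_0; apply: exp_increasing; have := PI_RGT_0; nra. }
  have Hgeom : ex_series (fun n => 2 * exp (- PI * Im tau) ^ n).
  { apply: (@ex_series_scal_l R_AbsRing R_NormedModule 2 (fun n => exp (- PI * Im tau) ^ n)).
    exact: ex_series_geom. }
  have dominated (p : C -> R) : (forall z, Rabs (p z) <= Cmod z) ->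
      ex_series (fun n => p (theta_pair e e' (RtoC 0) tau n)).
  { move=> Hp; apply: (@ex_series_le R_AbsRing R_CompleteNormedModule _ _ _ Hgeom) => n.
    exact: Rle_trans (Hp _) (Cmod_theta_pair_le _ _ _ _ He Htau). }
  apply: is_lim_Cseq_series; apply: dominated; [exact: Rabs_Re_le_Cmod | exact: Rabs_Im_le_Cmod].
Qed.

(* [cexp (qphase tau j a b)] is exp(pi i tau a / 100 + pi i j b / 50). *)
Definition qphase tau (j : nat) (a b : Z) : C :=
  (- PI * Im tau * IZR a / 100, PI * Re tau * IZR a / 100 + PI * INR j * IZR b / 50).

Definition qterm tau j (m : Z) : C := cexp (qphase tau j (m * m) m).

Lemma cexp_qphaseD tau j a b a' b' :
  Cmult (cexp (qphase tau j a b)) (cexp (qphase tau j a' b')) =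
  cexp (qphase tau j (a + a') (b + b')).
Proof.
  rewrite cexpD /qphase !plus_IZR; congr cexp.
  apply: injective_projections => /=; field.
Qed.

Lemma cexp_qphase0 tau j : cexp (qphase tau j 0 0) = RtoC 1.
Proof.
  rewrite -cexp0 /qphase; congr cexp.
  apply: injective_projections => /=; field.
Qed.

Lemma prod_cexp_qphase tau j (I : finType) (f g : I -> Z) :
  \big[Cmult/RtoC 1]_i cexp (qphase tau j (f i) (g i)) =
  cexp (qphase tau j (\big[Z.add/0%Z]_i f i) (\big[Z.add/0%Z]_i g i)).
Proof.
  apply: (big_rec3 (fun p a b => p = cexp (qphase tau j a b))).
  - by rewrite cexp_qphase0.
  - by move=> i p a b _ ->; rewrite cexp_qphaseD.
Qed.

Lemma theta_term_qterm tau e e' (r j : nat) n :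
  e = INR r / 5 -> e' = INR j / 5 ->
  theta_term e e' (RtoC 0) tau n = qterm tau j (10 * n + Z.of_nat r).
Proof.
  move=> -> ->; rewrite /theta_term /qterm /qphase !INR_IZR_INZ; congr cexp.
  case: tau => t1 t2; apply: injective_projections; cbn [fst snd Cmult Cplus RtoC Ci Re Im];
    rewrite ?(mult_IZR, plus_IZR); field.
Qed.

Lemma theta_term_qterm_reflected tau e e' (r j : nat) n :
  e = INR r / 5 -> e' = 2 - INR j / 5 ->
  theta_term e e' (RtoC 0) tau n =
  Cmult (cexp (0, PI * e)) (qterm tau j (10 * (- n - 1) + (10 - Z.of_nat r))).
Proof.
  move=> He He'; rewrite /theta_term /qterm /qphase cexpD.
  apply: (cexp_2PI_periodic _ _ n); case: tau => t1 t2;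
    rewrite He He' !INR_IZR_INZ; cbn [fst snd Cmult Cplus RtoC Ci Re Im];
    rewrite ?(mult_IZR, plus_IZR, minus_IZR, opp_IZR); field.
Qed.

Definition pair_sum (T : Z -> C) N : C :=
  \big[Cplus/RtoC 0]_(i < N) Cplus (T (Z.of_nat i)) (T (- Z.of_nat i - 1)%Z).

Lemma pair_sum_box T N :
  pair_sum T N = \big[Cplus/RtoC 0]_(a < N + N) T (Z.of_nat a - Z.of_nat N)%Z.
Proof.
  rewrite /pair_sum big_split big_split_ord /= Cplus_comm; congr Cplus.
  - rewrite (reindex_inj rev_ord_inj); apply: eq_bigr => i _; congr T.
    rewrite /= -minusE; have := ltn_ord i; move/ltP; lia.
  - by apply: eq_bigr => i _; congr T; rewrite /= -plusE; lia.
Qed.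

Lemma pair_sum_reflect T N : pair_sum (fun n => T (- n - 1)%Z) N = pair_sum T N.
Proof.
  apply: eq_bigr => i _; rewrite Cplus_comm; congr (Cplus (T _) _); lia.
Qed.

Lemma pair_sum_scale c T N : pair_sum (fun n => Cmult c (T n)) N = Cmult c (pair_sum T N).
Proof. by rewrite /pair_sum big_distrr; apply: eq_bigr => i _; rewrite -Cmult_plus_distr_l. Qed.

Definition box_sum tau j (r : Z) N : C :=
  \big[Cplus/RtoC 0]_(a < N + N) qterm tau j (10 * (Z.of_nat a - Z.of_nat N) + r).

Lemma theta_partial_box tau e e' (r j : nat) N :
  e = INR r / 5 -> e' = INR j / 5 ->
  theta_partial e e' tau N = box_sum tau j (Z.of_nat r) N.
Proof.
  move=> He He'; rewrite -[theta_partial _ _ _ _]/(pair_sum _ N) pair_sum_box.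
  by apply: eq_bigr => a _; rewrite (theta_term_qterm _ _ _ r j _ He He').
Qed.

Lemma theta_partial_box_reflected tau e e' (r j : nat) N :
  e = INR r / 5 -> e' = 2 - INR j / 5 ->
  theta_partial e e' tau N = Cmult (cexp (0, PI * e)) (box_sum tau j (10 - Z.of_nat r) N).
Proof.
  move=> He He'.
  pose h m := qterm tau j (10 * m + (10 - Z.of_nat r)).
  have -> : theta_partial e e' tau N = pair_sum (fun n => Cmult (cexp (0, PI * e)) (h (- n - 1)%Z)) N.
  { by apply: eq_bigr => i _; rewrite /theta_pair !(theta_term_qterm_reflected _ _ _ r j _ He He'). }
  rewrite pair_sum_scale pair_sum_reflect pair_sum_box.
  by congr Cmult; apply: eq_bigr => a _; rewrite /h; congr qterm; lia.
Qed.

Lemma theta_partial_pow5_reflected tau e e' (r j : nat) N :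
  e = INR r / 5 -> e' = 2 - INR j / 5 -> odd r ->
  Cpow (theta_partial e e' tau N) 5 = Copp (Cpow (box_sum tau j (10 - Z.of_nat r) N) 5).
Proof.
  move=> He He' Hr.
  rewrite (theta_partial_box_reflected _ _ _ r j _ He He') Cpow_mult_l.
  by rewrite (cexp_PI_fifth_pow5 _ r He Hr); ring.
Qed.

(** * Integer vectors and the reflection *)

Section IntegerVectors.

Context {I : finType}.
Implicit Type m : I -> Z.
Local Open Scope Z_scope.

Definition coord_sum m : Z := \big[Z.add/0]_i m i.
Definition sqnorm m : Z := \big[Z.add/0]_i (m i * m i).

Lemma coord_sum_const (c : Z) : coord_sum (fun _ => c) = Z.of_nat #|I| * c.
Proof.
  rewrite /coord_sum big_const; elim: #|I| => [|n IHn] //.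
  by rewrite iterS IHn Nat2Z.inj_succ; lia.
Qed.

Lemma coord_sum_shift m c : coord_sum (fun i => m i + c) = coord_sum m + Z.of_nat #|I| * c.
Proof. by rewrite /coord_sum big_split -coord_sum_const. Qed.

Lemma sqnorm_shift m c :
  sqnorm (fun i => m i + c) = sqnorm m + 2 * c * coord_sum m + Z.of_nat #|I| * (c * c).
Proof.
  rewrite /sqnorm /coord_sum -[Z.of_nat _ * _]coord_sum_const /coord_sum big_distrr -!big_split.
  by apply: eq_bigr => i _; cbn -[Z.add Z.mul]; ring.
Qed.

Lemma sqr_le_sqnorm m i : m i * m i <= sqnorm m.
Proof.
  rewrite /sqnorm (bigD1 i) //=.
  suff : 0 <= \big[Z.add/0]_(k | k != i) (m k * m k) by lia.
  by apply: big_ind => [|x y|k _]; nia.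
Qed.

Lemma sqnorm_lt_bound m b i : sqnorm m < b * b -> 0 <= b -> - b < m i < b.
Proof. by have := sqr_le_sqnorm m i; nia. Qed.

Lemma coord_sum_mod m (c d : Z) :
  (forall i, m i mod d = c mod d) -> coord_sum m mod d = (Z.of_nat #|I| * c) mod d.
Proof.
  move=> Hm; rewrite -coord_sum_const.
  apply: (big_ind2 (fun x y => x mod d = y mod d)) => // x1 x2 y1 y2 Hx Hy.
  by rewrite Zplus_mod Hx Hy -Zplus_mod.
Qed.

End IntegerVectors.

Section Reflection.

Local Open Scope Z_scope.

Definition odd_residue_class (m : 'I_5 -> Z) : Prop :=
  m ord0 mod 2 = 1 /\ forall i, m i mod 10 = m ord0 mod 10.

(* The orthogonal reflection in the hyperplane [coord_sum m = 0] when 5 divides [coord_sum m]. *)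
Definition reflect (m : 'I_5 -> Z) (i : 'I_5) : Z := m i - 2 * (coord_sum m / 5).

Variable m : 'I_5 -> Z.
Hypothesis m_class : odd_residue_class m.

Lemma coord_sum_odd_class : coord_sum m = 5 * (coord_sum m / 5) /\ (coord_sum m / 5) mod 2 = 1.
Proof.
  case: m_class => Hodd Hres.
  have := coord_sum_mod _ _ _ Hres; rewrite card_ord.
  by move: Hodd; Z.div_mod_to_equations; lia.
Qed.

Lemma coord_sum_reflect : coord_sum (reflect m) = - coord_sum m.
Proof.
  rewrite /reflect (coord_sum_shift m (- (2 * (coord_sum m / 5)))) card_ord.
  by have [Ht _] := coord_sum_odd_class; lia.
Qed.

Lemma sqnorm_reflect : sqnorm (reflect m) = sqnorm m.
Proof.
  rewrite /reflect (sqnorm_shift m (- (2 * (coord_sum m / 5)))) card_ord.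
  have [+ _] := coord_sum_odd_class; set t := coord_sum m / 5 => ->.
  by rewrite [Z.of_nat 5]/=; ring.
Qed.

Lemma reflect_odd_class : odd_residue_class (reflect m).
Proof.
  case: m_class => Hodd Hres; rewrite /reflect; split.
  - by move: Hodd; Z.div_mod_to_equations; lia.
  - by move=> i; move: (Hres i); Z.div_mod_to_equations; lia.
Qed.

Lemma reflectK i : reflect (reflect m) i = m i.
Proof.
  rewrite {1}/reflect coord_sum_reflect /reflect.
  by have [Ht _] := coord_sum_odd_class; Z.div_mod_to_equations; lia.
Qed.

End Reflection.

(* When every [m i] is [r] mod 10, the term [20 * m ord0] contributes the factor
   zeta5^(j r) up to a multiple of 2 pi i. *)
Definition lattice_weight tau j (m : 'I_5 -> Z) : C :=
  cexp (qphase tau j (sqnorm m) (coord_sum m + 20 * m ord0)).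

Lemma lattice_weight_eq tau j m m' : m =1 m' -> lattice_weight tau j m = lattice_weight tau j m'.
Proof.
  move=> Em; rewrite /lattice_weight /sqnorm /coord_sum Em.
  by congr (cexp (qphase _ _ _ (_ + _))); apply: eq_bigr => i _; rewrite Em.
Qed.

Lemma lattice_weight_reflect tau j m : odd j -> odd_residue_class m ->
  lattice_weight tau j (reflect m) = Copp (lattice_weight tau j m).
Proof.
  move=> Hj Hm; have [Ht Htodd] := coord_sum_odd_class m Hm.
  set t := (coord_sum m / 5)%Z in Ht Htodd.
  pose p := Z.of_nat j./2; pose s := (t / 2)%Z.
  have Hjp : Z.of_nat j = (2 * p + 1)%Z
    by rewrite {1}(odd_half_eq Hj) Nat2Z.inj_add Nat2Z.inj_mul.
  have Hts : t = (2 * s + 1)%Z by Z.div_mod_to_equations; lia.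
  have Hphase : (Z.of_nat j * (- coord_sum m + 20 * (m ord0 - 2 * t)) =
      Z.of_nat j * (coord_sum m + 20 * m ord0) + 50 + 100 * (- 2 * p * s - p - s - 1))%Z.
  { by rewrite Hjp Ht Hts; ring. }
  rewrite /lattice_weight (sqnorm_reflect m Hm) (coord_sum_reflect m Hm).
  apply: (cexp_PI_antiperiodic _ _ (- 2 * p * s - p - s - 1)) => //=.
  have /(f_equal IZR) := Hphase; rewrite /reflect -/t !INR_IZR_INZ.
  rewrite !(mult_IZR, plus_IZR) => HR.
  have := f_equal (Rmult PI) HR; lra.
Qed.

(** * The box and its involution *)

Notation box_index N := ('I_5 * {ffun 'I_5 -> 'I_(N + N)})%type.

Definition in_ball (N : nat) (m : 'I_5 -> Z) : bool :=
  (sqnorm m <? 100 * Z.of_nat N * Z.of_nat N)%Z.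

Section BoxIndex.

Context {N : nat}.
Local Open Scope Z_scope.

Definition coords (x : box_index N) (i : 'I_5) : Z :=
  10 * (Z.of_nat (x.2 i) - Z.of_nat N) + (2 * Z.of_nat x.1 + 1).

(* A partial inverse of [coords]; [x0] only supplies default values. *)
Definition decode (x0 : box_index N) (m : 'I_5 -> Z) : box_index N :=
  (insubd x0.1 (Z.to_nat (m ord0 mod 10 / 2)),
   [ffun i => insubd (x0.2 i) (Z.to_nat (m i / 10 + Z.of_nat N))]).

Lemma ord_bounds (x : box_index N) i :
  0 <= Z.of_nat x.1 < 5 /\ 0 <= Z.of_nat (x.2 i) < 2 * Z.of_nat N.
Proof.
  have /ltP H1 := ltn_ord x.1; have := ltn_ord (x.2 i).
  move: (nat_of_ord (x.2 i)) => a /ltP H2; rewrite -plusE in H2; lia.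
Qed.

Lemma coords_odd_class x : odd_residue_class (coords x).
Proof.
  have [H1 _] := ord_bounds x ord0; rewrite /coords; split.
  - by Z.div_mod_to_equations; lia.
  - by move=> i; Z.div_mod_to_equations; lia.
Qed.

Lemma coords_inj x y : coords x =1 coords y -> x = y.
Proof.
  case: x y => [k f] [k' f'] Exy.
  have Ek : k = k'.
  { apply: ord_inj; apply: Nat2Z.inj; have := Exy ord0; rewrite /coords; cbn [fst snd].
    have := ord_bounds (k, f) ord0; have := ord_bounds (k', f') ord0; cbn [fst snd]; lia. }
  subst k'; congr pair; apply/ffunP => i; apply: ord_inj; apply: Nat2Z.inj.
  have := Exy i; rewrite /coords; cbn [fst snd].
  move: (Z.of_nat (f i)) (Z.of_nat (f' i)) => a b; lia.
Qed.

Lemma coords_decode x0 m : odd_residue_class m ->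
  (forall i, - (10 * Z.of_nat N) < m i < 10 * Z.of_nat N) -> coords (decode x0 m) =1 m.
Proof.
  move=> [Hodd Hres] Hb i; have Hbi := Hb i; have Hri := Hres i.
  have Hk : (Z.to_nat (m ord0 mod 10 / 2) < 5)%N.
  { by apply/ltP; Z.div_mod_to_equations; lia. }
  have Ha : (Z.to_nat (m i / 10 + Z.of_nat N) < N + N)%N.
  { by rewrite -plusE; apply/ltP; Z.div_mod_to_equations; lia. }
  rewrite /coords /decode; cbn [fst snd]; rewrite ffunE !val_insubd Hk Ha.
  by move: Hodd; Z.div_mod_to_equations; lia.
Qed.

Definition box_involution (x : box_index N) : box_index N :=
  if in_ball N (coords x) then decode x (reflect (coords x)) else x.

Lemma coords_box_involution x :
  in_ball N (coords x) -> coords (box_involution x) =1 reflect (coords x).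
Proof.
  move=> Hb; rewrite /box_involution Hb; have Hx := coords_odd_class x.
  apply: coords_decode; first exact: reflect_odd_class.
  move=> i; apply: sqnorm_lt_bound; last lia.
  by rewrite sqnorm_reflect //; move/Z.ltb_lt: Hb; lia.
Qed.

Lemma in_ball_box_involution x : in_ball N (coords (box_involution x)) = in_ball N (coords x).
Proof.
  case Hb: (in_ball N (coords x)); last by rewrite /box_involution Hb.
  rewrite -Hb /in_ball -(sqnorm_reflect _ (coords_odd_class x)).
  by congr Z.ltb; apply: eq_bigr => i _; rewrite coords_box_involution.
Qed.

Lemma box_involutionK : involutive box_involution.
Proof.
  move=> x; case Hb: (in_ball N (coords x)); last by rewrite /box_involution !Hb.
  apply: coords_inj => i.
  rewrite coords_box_involution ?in_ball_box_involution // -(reflectK _ (coords_odd_class x) i).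
  rewrite /reflect coords_box_involution //; congr (_ - 2 * (_ / 5)).
  by apply: eq_bigr => k _; rewrite coords_box_involution.
Qed.

End BoxIndex.

Definition quintic_box_sum tau j N : C :=
  \big[Cplus/RtoC 0]_(k < 5)
    Cmult (Cpow zeta5 (j * (2 * k + 1))) (Cpow (box_sum tau j (2 * Z.of_nat k + 1) N) 5).

Lemma lattice_weight_coords tau j N (x : box_index N) :
  lattice_weight tau j (coords x) =
  Cmult (Cpow zeta5 (j * (2 * x.1 + 1))) (\big[Cmult/RtoC 1]_i qterm tau j (coords x i)).
Proof.
  rewrite /qterm prod_cexp_qphase zeta5_pow cexpD /lattice_weight.
  apply: (cexp_2PI_periodic _ _ (2 * Z.of_nat j * (Z.of_nat (x.2 ord0) - Z.of_nat N)));
    rewrite /qphase /Re /Im; cbn [fst snd Cplus];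
    rewrite /sqnorm /coord_sum; first ring.
  have -> : INR (j * (2 * x.1 + 1)) = INR j * (2 * INR x.1 + 1).
  { move: (nat_of_ord x.1) => k; rewrite -multE -plusE mult_INR plus_INR mult_INR /=; ring. }
  rewrite [coords x ord0]/coords !INR_IZR_INZ !(mult_IZR, plus_IZR, minus_IZR).
  field.
Qed.

Lemma quintic_box_sum_lattice tau j N :
  quintic_box_sum tau j N = \big[Cplus/RtoC 0]_(x : box_index N) lattice_weight tau j (coords x).
Proof.
  rewrite -(pair_bigA _ (fun k f => lattice_weight tau j (coords (k, f)))).
  apply: eq_bigr => k _; rewrite [Cpow (box_sum _ _ _ _) _]Cpow_big /box_sum bigA_distr_bigA big_distrr.
  by apply: eq_bigr => f _; rewrite lattice_weight_coords.
Qed.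

Lemma in_ball_sum_eq0 tau j N : odd j ->
  \big[Cplus/RtoC 0]_(x : box_index N)
    (if in_ball N (coords x) then lattice_weight tau j (coords x) else RtoC 0) = RtoC 0.
Proof.
  move=> Hj; apply: (big_involution_opp _ _ _ box_involutionK) => x.
  rewrite in_ball_box_involution; case Hb: (in_ball N (coords x)); last by rewrite Copp_0.
  rewrite (lattice_weight_eq _ _ _ _ (coords_box_involution _ Hb)).
  exact: lattice_weight_reflect (coords_odd_class x).
Qed.

Lemma Cmod_lattice_weight_le tau j N m : 0 < Im tau -> in_ball N m = false ->
  Cmod (lattice_weight tau j m) <= exp (- PI * Im tau * (INR N * INR N)).
Proof.
  move=> Htau /Z.ltb_ge /IZR_le; rewrite !mult_IZR -!INR_IZR_INZ => Hm.
  have HPI : 0 < PI * Im tau by have := PI_RGT_0; nra.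
  rewrite /lattice_weight Cmod_cexp; apply: exp_le_compat; rewrite /qphase /Re /=; nra.
Qed.

Lemma Cmod_quintic_box_sum_le tau j N : odd j -> 0 < Im tau ->
  Cmod (quintic_box_sum tau j N) <=
  INR #|{: box_index N}| * exp (- PI * Im tau * (INR N * INR N)).
Proof.
  move=> Hj Htau; rewrite quintic_box_sum_lattice.
  rewrite (eq_bigr (fun x => Cplus
    (if in_ball N (coords x) then lattice_weight tau j (coords x) else RtoC 0)
    (if in_ball N (coords x) then RtoC 0 else lattice_weight tau j (coords x)))); last first.
  { by move=> x _; case: in_ball; rewrite ?Cplus_0_l ?Cplus_0_r. }
  rewrite big_split /= in_ball_sum_eq0 // Cplus_0_l; apply: Cmod_big_le => x.
  case Hb: (in_ball N (coords x)); last exact: Cmod_lattice_weight_le.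
  by rewrite Cmod_0; exact: Rlt_le (exp_pos _).
Qed.

Lemma card_box_index N : INR #|{: box_index N}| = 160 * INR N ^ 5.
Proof.
  rewrite card_prod card_ffun !card_ord !expnS expn0 muln1 -multE -plusE.
  by rewrite !mult_INR plus_INR /=; ring.
Qed.

Lemma is_lim_Cseq_quintic_box_sum tau j : odd j -> 0 < Im tau -> is_lim_Cseq (quintic_box_sum tau j) (RtoC 0).
Proof.
  move=> Hj Htau; have HPI : 0 < PI * Im tau by have := PI_RGT_0; nra.
  apply: (is_lim_Cseq_0 _ _ (fun N => Cmod_quintic_box_sum_le tau j N Hj Htau)).
  have := is_lim_seq_scal_l _ 160 _ (is_lim_seq_pow_mul_exp_sqr 5 _ HPI); rewrite /= Rmult_0_r.
  apply: is_lim_seq_ext => N; rewrite card_box_index Ropp_mult_distr_l; ring.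
Qed.

Definition quintic_relation (j : nat) (a b c d e : C) : C :=
  Cplus (Cplus (Cplus (Cplus
    (Cmult (Cpow zeta5 (j * 1)) (Cpow a 5))
    (Cmult (Cpow zeta5 (j * 3)) (Cpow b 5)))
    (Cmult (Cpow zeta5 (j * 5)) (Cpow c 5)))
    (Copp (Cmult (Cpow zeta5 (j * 7)) (Cpow d 5))))
    (Copp (Cmult (Cpow zeta5 (j * 9)) (Cpow e 5))).

Lemma quintic_relation_partial tau j N :
  quintic_relation j
    (theta_partial (1/5) (INR j / 5) tau N) (theta_partial (3/5) (INR j / 5) tau N)
    (theta_partial 1 (INR j / 5) tau N) (theta_partial (3/5) (2 - INR j / 5) tau N)
    (theta_partial (1/5) (2 - INR j / 5) tau N)
  = quintic_box_sum tau j N.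
Proof.
  rewrite /quintic_relation.
  rewrite (theta_partial_box tau (1/5) _ 1 j N ltac:(simpl; lra) erefl).
  rewrite (theta_partial_box tau (3/5) _ 3 j N ltac:(simpl; lra) erefl).
  rewrite (theta_partial_box tau 1 _ 5 j N ltac:(simpl; lra) erefl).
  rewrite (theta_partial_pow5_reflected tau (3/5) _ 3 j N ltac:(simpl; lra) erefl erefl).
  rewrite (theta_partial_pow5_reflected tau (1/5) _ 1 j N ltac:(simpl; lra) erefl erefl).
  have opp_mult_opp x y : Copp (Cmult x (Copp y)) = Cmult x y by ring.
  by rewrite !opp_mult_opp /quintic_box_sum !big_ord_recl big_ord0 Cplus_0_r !Cplus_assoc.
Qed.

Lemma is_lim_Cseq_quintic_relation j a b c d e A B C' D E :
  is_lim_Cseq a A -> is_lim_Cseq b B -> is_lim_Cseq c C' -> is_lim_Cseq d D -> is_lim_Cseq e E ->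
  is_lim_Cseq (fun n => quintic_relation j (a n) (b n) (c n) (d n) (e n))
    (quintic_relation j A B C' D E).
Proof.
  move=> Ha Hb Hc Hd He; have term u U k : is_lim_Cseq u U ->
    is_lim_Cseq (fun n => Cmult (Cpow zeta5 k) (Cpow (u n) 5)) (Cmult (Cpow zeta5 k) (Cpow U 5)).
  { by move=> Hu; apply: is_lim_Cseq_mult; [exact: is_lim_Cseq_const | exact: is_lim_Cseq_pow]. }
  by do !apply: is_lim_Cseq_plus; try apply: is_lim_Cseq_opp; apply: term.
Qed.

Lemma theta_quintic_relation j tau : odd j -> 0 < Im tau ->
  quintic_relation j
    (theta_const (1/5) (INR j / 5) tau) (theta_const (3/5) (INR j / 5) tau)
    (theta_const 1 (INR j / 5) tau) (theta_const (3/5) (2 - INR j / 5) tau)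
    (theta_const (1/5) (2 - INR j / 5) tau)
  = RtoC 0.
Proof.
  move=> Hj Htau; apply: is_lim_Cseq_unique (is_lim_Cseq_quintic_relation _ _ _ _ _ _ _ _ _ _ _
    (is_lim_Cseq_theta_partial _ _ _ _ Htau) (is_lim_Cseq_theta_partial _ _ _ _ Htau)
    (is_lim_Cseq_theta_partial _ _ _ _ Htau) (is_lim_Cseq_theta_partial _ _ _ _ Htau)
    (is_lim_Cseq_theta_partial _ _ _ _ Htau)) _; try lra.
  apply: (is_lim_Cseq_ext (quintic_box_sum tau j)); last exact: is_lim_Cseq_quintic_box_sum.
  by move=> N; rewrite quintic_relation_partial.
Qed.

Theorem theorem3p2 : forall tau : C, 0 < Im tau ->
  Cplus (Cplus (Cplus (Cplus
    (Cmult zeta5 (Cpow (theta_const (1/5) (1/5) tau) 5))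
    (Cmult (Cpow zeta5 3) (Cpow (theta_const (3/5) (1/5) tau) 5)))
    (Cpow (theta_const 1 (1/5) tau) 5))
    (Copp (Cmult (Cpow zeta5 2) (Cpow (theta_const (3/5) (9/5) tau) 5))))
    (Copp (Cmult (Cpow zeta5 4) (Cpow (theta_const (1/5) (9/5) tau) 5)))
  = RtoC 0
  /\
  Cplus (Cplus (Cplus (Cplus
    (Cmult (Cpow zeta5 3) (Cpow (theta_const (1/5) (3/5) tau) 5))
    (Cmult (Cpow zeta5 4) (Cpow (theta_const (3/5) (3/5) tau) 5)))
    (Cpow (theta_const 1 (3/5) tau) 5))
    (Copp (Cmult zeta5 (Cpow (theta_const (3/5) (7/5) tau) 5))))
    (Copp (Cmult (Cpow zeta5 2) (Cpow (theta_const (1/5) (7/5) tau) 5)))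
  = RtoC 0.
Proof.
  move=> tau Htau; split.
  - have := theta_quintic_relation 1 tau isT Htau.
    replace (INR 1 / 5) with (1 / 5) by (simpl; lra).
    replace (2 - 1 / 5) with (9 / 5) by lra.
    rewrite /quintic_relation (zeta5_pow_eq (1 * 1) 1) // Cpow_1_r (zeta5_pow_eq (1 * 5) 0) //.
    by rewrite (zeta5_pow_eq (1 * 7) 2) // (zeta5_pow_eq (1 * 9) 4) // Cmult_1_l.
  - have := theta_quintic_relation 3 tau isT Htau.
    replace (INR 3 / 5) with (3 / 5) by (simpl; lra).
    replace (2 - 3 / 5) with (7 / 5) by lra.
    rewrite /quintic_relation (zeta5_pow_eq (3 * 5) 0) // (zeta5_pow_eq (3 * 7) 1) // Cpow_1_r.
    by rewrite (zeta5_pow_eq (3 * 3) 4) // (zeta5_pow_eq (3 * 9) 2) // Cmult_1_l.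
Qed.
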